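(* Let $H$ be normalised. Then for every integer $j\ge1$, $c^{2j}>\frac1q\mathrm{Tr}\,L^{2j}$.
   Context: Let $q\ge 2$ be an integer and let $(a_n)_{n\in\mathbb Z}$, $(b_n)_{n\in\mathbb Z}$ be real sequences with $a_n>0$, $a_{n+q}=a_n$, $b_{n+q}=b_n$ for all $n$. $H$ is the operator on $\ell^2(\mathbb Z)$ given by $(H\psi)_n=a_{n-1}\psi_{n-1}+b_n\psi_n+a_n\psi_{n+1}$. For $\lambda\in\mathbb C$ let $\phi(\lambda),\theta(\lambda)$ be the solutions of $a_{n-1}\psi_{n-1}+b_n\psi_n+a_n\psi_{n+1}=\lambda\psi_n$ ($n\in\mathbb Z$) with $\phi_0=0,\phi_1=1$ and $\theta_0=1,\theta_1=0$; the discriminant is $D(\lambda)=\phi_{q+1}(\lambda)+\theta_q(\lambda)$. The spectrum of $H$ is $\{\lambda\in\mathbb R:|D(\lambda)|\le 2\}$, with smallest point $\lambda^+_0$ and largest point $\lambda^-_q$; $c=(\lambda^-_q-\lambda^+_0)/2$. $H$ is called normalised if $\lambda^+_0=-\lambda^-_q$. The matrix $L$ is defined by $L=\begin{pmatrix} b_1 & a_1+ia_2\\ a_1-ia_2 & b_2\end{pmatrix}$ if $q=2$, and for $q\ge 3$ by $L_{jj}=b_j$, $L_{j,j+1}=L_{j+1,j}=a_j$ ($1\le j\le q-1$), $L_{1q}=ia_q$, $L_{q1}=-ia_q$, other entries $0$. *)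

From HB Require Import structures.
From mathcomp Require Import all_boot all_order all_algebra.
From mathcomp Require Import all_classical all_reals.
From mathcomp Require Import complex.
Set Implicit Arguments. Unset Strict Implicit. Unset Printing Implicit Defensive.
Import Order.TTheory GRing.Theory Num.Theory.
Local Open Scope ring_scope.
Local Open Scope classical_set_scope.

Section Jacobi.
Variable R : realType.
Variables (q : nat) (a b : int -> R).

(* Solution of  a_{n-1} psi_{n-1} + b_n psi_n + a_n psi_{n+1} = lam psi_n,
   with initial data psi_0 = p0, psi_1 = p1 (for real lam).
   jacobi_sol lam p0 p1 k = (psi_k, psi_{k+1}). *)
Fixpoint jacobi_sol (lam p0 p1 : R) (k : nat) : R * R :=
  match k with
  | 0 => (p0, p1)
  | k'.+1 =>
      let: (x, y) := jacobi_sol lam p0 p1 k' in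
      (y, ((lam - b (Posz k'.+1)) * y - a (Posz k') * x) / a (Posz k'.+1))
  end.

Definition phi_ (lam : R) (n : nat) : R := (jacobi_sol lam 0 1 n).1.
Definition theta_ (lam : R) (n : nat) : R := (jacobi_sol lam 1 0 n).1.

Definition discr (lam : R) : R := phi_ lam q.+1 + theta_ lam q.

Definition spectrum : set R := [set lam : R | `|discr lam| <= 2].

Definition lam0p : R := inf spectrum.
Definition lamqm : R := sup spectrum.
Definition halfwidth : R := (lamqm - lam0p) / 2.

Definition normalised : Prop := lam0p = - lamqm.

Local Open Scope complex_scope.
(* the matrix L (0-based indices i : 'I_q correspond to 1..q) *)
Definition Lmat : 'M[R[i]]_q :=
  \matrix_(i < q, j < q)
    if i == j then (b (Posz i.+1))%:C
    else if q == 2%N then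
      (if (i == 0%N :> nat) then (a 1)%:C + 'i * (a 2)%:C
       else (a 1)%:C - 'i * (a 2)%:C)
    else if (j == i.+1 :> nat) then (a (Posz i.+1))%:C
    else if (i == j.+1 :> nat) then (a (Posz j.+1))%:C
    else if (i == 0%N :> nat) && (j == q.-1 :> nat) then 'i * (a (Posz q))%:C
    else if (i == q.-1 :> nat) && (j == 0%N :> nat) then - ('i * (a (Posz q))%:C)
    else 0.
End Jacobi.

Definition mxpow (C : pzRingType) (n : nat) (M : 'M[C]_n) (k : nat) : 'M[C]_n :=
  iter k (mulmx M) 1%:M.

From HB Require Import structures.
From mathcomp Require Import all_boot all_order all_algebra.
From mathcomp Require Import all_classical all_reals.
From mathcomp Require Import complex.
From mathcomp Require Import topology normedtype derive.
From mathcomp Require Import polyrcf.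
From mathcomp Require Import ring lra zify.
Import Order.TTheory GRing.Theory Num.Theory.
Import numFieldNormedType.Exports.
Set Implicit Arguments. Unset Strict Implicit. Unset Printing Implicit Defensive.

(* Since L is Hermitian, (1/q) Tr L^(2j) is the mean of mu^(2j) over its real
   eigenvalues mu, so it suffices that |mu| < c for each of them.  A left
   eigenvector of L for mu is a solution psi of the Jacobi recurrence at lambda = mu
   with psi_(k+q) = i psi_k.  So the monodromy matrix, whose determinant is 1 by
   constancy of the Wronskian, has the eigenvalue i, and its trace D(mu) vanishes.
   As D is a polynomial of degree q, the spectrum is bounded, and |D| <= 2 near the
   root mu puts mu strictly between lambda_0^+ and lambda_q^-, that is in (-c, c)
   when H is normalised. *)

Local Open Scope ring_scope.

Section JacobiRecurrence.
Variables (R : realType) (a b : int -> R).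
Hypothesis a_gt0 : forall n : int, 0 < a n.

Lemma a_neq0 (n : int) : a n != 0. Proof. by rewrite gt_eqF. Qed.

Definition jacobi_seq lam p0 p1 k := (jacobi_sol a b lam p0 p1 k).1.

Lemma jacobi_sol_snd lam p0 p1 k :
  (jacobi_sol a b lam p0 p1 k).2 = jacobi_seq lam p0 p1 k.+1.
Proof. by rewrite /jacobi_seq /=; case: (jacobi_sol _ _ _ _ _ k). Qed.

Lemma jacobi_seqSS lam p0 p1 (k : nat) : jacobi_seq lam p0 p1 k.+2 =
  ((lam - b k.+1) * jacobi_seq lam p0 p1 k.+1 - a k * jacobi_seq lam p0 p1 k) / a k.+1.
Proof.
rewrite -jacobi_sol_snd -[jacobi_seq _ _ _ k.+1]jacobi_sol_snd /jacobi_seq /=.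
by case: (jacobi_sol _ _ _ _ _ k).
Qed.

Lemma jacobi_seq_rec lam p0 p1 (k : nat) :
  a k * jacobi_seq lam p0 p1 k + b k.+1 * jacobi_seq lam p0 p1 k.+1
  + a k.+1 * jacobi_seq lam p0 p1 k.+2 = lam * jacobi_seq lam p0 p1 k.+1.
Proof. by rewrite jacobi_seqSS; field; exact: a_neq0. Qed.

Lemma jacobi_wronskian lam (k : nat) :
  a k * (theta_ a b lam k * phi_ a b lam k.+1 - phi_ a b lam k * theta_ a b lam k.+1)
  = a 0.
Proof.
rewrite /theta_ /phi_ -!/(jacobi_seq _ _ _ _).
elim: k => [|k IH]; first by rewrite /jacobi_seq /=; ring.
by rewrite -IH !jacobi_seqSS; field; exact: a_neq0.
Qed.

Fixpoint jacobi_poly (p0 p1 : {poly R}) k : {poly R} * {poly R} :=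
  match k with
  | 0 => (p0, p1)
  | k'.+1 => let: (x, y) := jacobi_poly p0 p1 k' in
     (y, (a k'.+1)^-1 *: (('X - (b k'.+1)%:P) * y - a k' *: x))
  end.

Lemma jacobi_sol_horner lam p0 p1 k : jacobi_sol a b lam p0 p1 k =
  ((jacobi_poly p0%:P p1%:P k).1.[lam], (jacobi_poly p0%:P p1%:P k).2.[lam]).
Proof.
elim: k => [|k IH] /=; first by rewrite !hornerC.
rewrite IH; case: (jacobi_poly _ _ k) => x y /=.
by rewrite !(hornerZ, hornerD, hornerN, hornerM, hornerX, hornerC) mulrC.
Qed.

Lemma size_jacobi_poly_phi k :
  size (jacobi_poly 0 1 k).1 = k /\ size (jacobi_poly 0 1 k).2 = k.+1.
Proof.
elim: k => [|k] /=; first by rewrite size_poly0 size_poly1.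
case: (jacobi_poly _ _ k) => x y /= [size_x size_y]; split=> //.
have size_Xy : size (('X - (b k.+1)%:P) * y) = k.+2.
  by rewrite size_monicM ?monicXsubC ?size_XsubC ?size_y // -size_poly_eq0 size_y.
rewrite size_scale ?invr_eq0 ?a_neq0 // size_polyDl ?size_polyN ?size_Xy //.
by rewrite (leq_ltn_trans (size_scale_leq _ _)) // size_x.
Qed.

Lemma size_jacobi_poly_theta k :
  (size (jacobi_poly 1 0 k).1 <= maxn 1 k)%N /\
  (size (jacobi_poly 1 0 k).2 <= maxn 1 k.+1)%N.
Proof.
elim: k => [|k] /=; first by rewrite size_poly0 size_poly1.
case: (jacobi_poly _ _ k) => x y /= [size_x size_y]; split=> //.
rewrite (leq_trans (size_scale_leq _ _)) // (leq_trans (size_polyD _ _)) //.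
rewrite geq_max size_polyN; apply/andP; split.
  rewrite (leq_trans (size_polyMleq _ _)) // size_XsubC.
  by move: size_y; case: k {size_x} => [|k] /=; lia.
by rewrite (leq_trans (size_scale_leq _ _)) // (leq_trans size_x) //; lia.
Qed.

Definition discr_poly q := (jacobi_poly 0 1 q.+1).1 + (jacobi_poly 1 0 q).1.

Lemma horner_discr_poly q lam : (discr_poly q).[lam] = discr q a b lam.
Proof. by rewrite /discr_poly /discr /phi_ /theta_ hornerD !jacobi_sol_horner. Qed.

Lemma size_discr_poly q : (0 < q)%N -> size (discr_poly q) = q.+1.
Proof.
move=> q_gt0; have [size_phi _] := size_jacobi_poly_phi q.+1.
rewrite /discr_poly size_polyDl size_phi //.
have [size_theta _] := size_jacobi_poly_theta q.
by apply: (leq_ltn_trans size_theta); lia.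
Qed.

End JacobiRecurrence.

Section PolynomialGrowth.
Variable R : realType.

Lemma poly_sqr_ge_at_pinfty (p : {poly R}) (m : R) : (1 < size p)%N ->
  exists n, forall x, n <= x -> m <= p.[x] ^+ 2.
Proof.
move=> size_p; have p_neq0 : p != 0 by rewrite -size_poly_eq0; case: size size_p.
have [||n p_big] := @poly_lim_infty R (p * p) m.
- by rewrite lead_coefM -expr2 lt_def sqr_ge0 andbT expf_neq0 // lead_coef_eq0.
- by rewrite size_mul //; case: size size_p => // k; rewrite addSn /=; lia.
by exists n => x /p_big; rewrite hornerM expr2.
Qed.

Lemma poly_norm_gt_at_infty (p : {poly R}) (m : R) : (1 < size p)%N ->
  exists n, forall x, n <= `|x| -> m < `|p.[x]|.
Proof.
move=> size_p.
have size_pN : (1 < size (p \Po - 'X))%N.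
  by rewrite size_comp_poly2 // size_polyN size_polyX.
have [n1 p_big] := poly_sqr_ge_at_pinfty (m ^+ 2 + 1) size_p.
have [n2 pN_big] := poly_sqr_ge_at_pinfty (m ^+ 2 + 1) size_pN.
exists (Num.max n1 n2) => x; rewrite ge_max => /andP[n1x n2x].
have sqr_p_big : m ^+ 2 + 1 <= p.[x] ^+ 2.
  have [x_ge0|x_lt0] := lerP 0 x; first by apply: p_big; rewrite -(ger0_norm x_ge0).
  have := pN_big (- x); rewrite horner_comp hornerN hornerX opprK; apply.
  by rewrite -(ltr0_norm x_lt0).
have [m_lt0|m_ge0] := ltP m 0; first exact: lt_le_trans m_lt0 (normr_ge0 _).
rewrite -(@ltr_pXn2r _ 2) ?nnegrE //= real_normK ?num_real //.
by apply: lt_le_trans sqr_p_big; rewrite ltrDl.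
Qed.

Lemma poly_norm_lt_near_root (p : {poly R}) (mu e : R) : p.[mu] = 0 -> 0 < e ->
  exists2 d, 0 < d & `|p.[mu - d]| < e /\ `|p.[mu + d]| < e.
Proof.
move=> p_mu e_gt0.
have : \forall t \near mu, `|p.[mu] - p.[t]| < e.
  exact: (cvgr_dist_lt _ _ (@continuous_horner _ p mu) _ e_gt0).
rewrite p_mu => /(nbhs_ballP mu _).1[d d_gt0 near_mu].
have small t : `|t| < d -> `|p.[mu + t]| < e.
  move=> t_lt; have := near_mu (mu + t); rewrite /= sub0r normrN; apply.
  by rewrite -ball_normE /= opprD addrA subrr sub0r normrN.
exists (d / 2); first by rewrite divr_gt0.
have half_lt : `|d / 2| < d.
  by rewrite gtr0_norm ?divr_gt0 // ltr_pdivrMr // ltr_pMr // ltr1n.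
by split; apply: small; rewrite ?normrN.
Qed.

End PolynomialGrowth.

Section SpectrumInterior.
Variables (R : realType) (q : nat) (a b : int -> R).
Hypothesis a_gt0 : forall n : int, 0 < a n.
Hypothesis q_gt0 : (0 < q)%N.

Lemma spectrum_bounded : exists n, forall x, spectrum q a b x -> `|x| < n.
Proof.
have size_D : (1 < size (discr_poly a b q))%N by rewrite size_discr_poly.
have [n D_big] := poly_norm_gt_at_infty 2 size_D.
exists n => x; rewrite /spectrum /= -horner_discr_poly => D_le2.
by rewrite ltNge; apply/negP => /D_big; rewrite ltNge D_le2.
Qed.

Lemma discr_root_interior (mu : R) :
  discr q a b mu = 0 -> lam0p q a b < mu < lamqm q a b.
Proof.
rewrite -horner_discr_poly => /poly_norm_lt_near_root/(_ ltr01)[d d_gt0 [Dl Dr]].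
have [n spec_lt] := spectrum_bounded.
have ub : has_ubound (spectrum q a b).
  by exists n => x /spec_lt /(le_lt_trans (ler_norm x)) /ltW.
have lb : has_lbound (spectrum q a b).
  by exists (- n) => x /spec_lt; rewrite ltr_norml => /andP[/ltW].
have in_spec x : `|(discr_poly a b q).[x]| < 1 -> spectrum q a b x.
  by rewrite /spectrum /= -horner_discr_poly => /ltW/le_trans; apply; lra.
apply/andP; split.
  by apply: le_lt_trans (ge_inf lb (in_spec _ Dl)) _; lra.
by apply: lt_le_trans (ub_le_sup ub (in_spec _ Dr)); lra.
Qed.

End SpectrumInterior.

Local Open Scope complex_scope.

Section HermitianTrace.
Variables (R : realType) (n : nat) (A : 'M[R[i]]_n.+1).
Hypothesis A_herm : A \is hermsymmx.

Let P := spectralmx A.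
Let d := spectral_diag A.
Let P_unit : P \in unitmx := spectral_unit A.

Lemma spectral_diag_realE k : (complex.Re (d 0 k))%:C = d 0 k.
Proof. by apply: RRe_real; exact: mxOverP (hermitian_spectral_diag_real A_herm) 0 k. Qed.

Lemma spectral_mxpow m : mxpow A m = invmx P *m diag_mx (\row_k (d 0 k ^+ m)) *m P.
Proof.
have /orthomx_spectralP A_spectral := hermitian_normalmx A_herm.
elim: m => [|m IH].
  rewrite /mxpow /= (_ : \row_k (d 0 k ^+ 0) = const_mx 1).
    by rewrite diag_const_mx mulmx1 (mulVmx P_unit).
  by apply/rowP => k; rewrite !mxE expr0.
rewrite [mxpow A m.+1]/mxpow /= -/(mxpow A m) IH {1}A_spectral.
rewrite !mulmxA (mulmxK P_unit) -[invmx _ *m _ *m diag_mx _]mulmxA mulmx_diag.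
by congr (_ *m diag_mx _ *m _); apply/matrixP => i0 k; rewrite !mxE exprS.
Qed.

Lemma spectral_row_eigen k :
  row k P != 0 /\ row k P *m A = (complex.Re (d 0 k))%:C *: row k P.
Proof.
have /orthomx_spectralP A_spectral := hermitian_normalmx A_herm.
split.
  apply/negP => /eqP row0.
  have := row_mul k P (invmx P); rewrite (mulmxV P_unit) row0 mul0mx.
  by move=> /(congr1 (fun M : 'rV_n.+1 => M 0 k)); rewrite !mxE eqxx => /eqP; rewrite oner_eq0.
have PA_diag : P *m A = diag_mx d *m P.
  by rewrite {1}A_spectral !mulmxA (mulmxV P_unit) mul1mx.
by apply/rowP => l; rewrite -row_mul PA_diag mul_diag_mx spectral_diag_realE !mxE.
Qed.

Lemma hermitian_trace_mxpow_lt (c : R) (j : nat) :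
  (forall mu : R, (exists2 v : 'rV_n.+1, v != 0 & v *m A = mu%:C *: v) -> `|mu| < c) ->
  (0 < j)%N -> (n.+1%:R)^-1 * \tr (mxpow A (2 * j)) < (c ^+ (2 * j))%:C.
Proof.
move=> eigen_lt j_gt0.
have d_lt k : `|complex.Re (d 0 k)| < c.
  by have [row_neq0 row_eig] := spectral_row_eigen k; apply: eigen_lt; exists (row k P).
rewrite spectral_mxpow mxtrace_mulC mulmxA (mulmxV P_unit) mul1mx mxtrace_diag.
under eq_bigr => k _ do rewrite mxE -spectral_diag_realE -rmorphXn.
have -> : (n.+1%:R : R[i])^-1 = ((n.+1%:R : R)^-1)%:C by rewrite fmorphV rmorph_nat.
rewrite -rmorph_sum -rmorphM ltcR.
rewrite ltr_pdivrMl ?ltr0n // mulr_natl.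
apply: (@lt_le_trans _ _ (\sum_(k < n.+1) c ^+ (2 * j))); last first.
  by rewrite sumr_const card_ord.
apply: ltr_sum; first by apply/hasP; exists ord0; rewrite ?mem_index_enum.
move=> k _; rewrite exprM -real_normK ?num_real // -exprM ltrXn2r //.
by rewrite muln_eq0 negb_or /= -lt0n j_gt0.
Qed.

End HermitianTrace.

(* Evaluates every [if c] and [c%:R] whose boolean [c] lia decides. *)
Ltac decide_conds :=
  repeat match goal with
  | |- context [nat_of_bool ?c] =>
    match c with true => fail 1 | false => fail 1 | _ => idtac end;
    let E := fresh in
    first [ have E : c = true by lia | have E : c = false by lia ]; rewrite E; clear E
  | |- context [if ?c then _ else _] =>
    match c with true => fail 1 | false => fail 1 | _ => idtac end;
    let E := fresh in
    first [ have E : c = true by lia | have E : c = false by lia ]; rewrite E; clear E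
  end;
  rewrite /= ?mulr1n ?mulr0n ?mul0r ?mul1r ?add0r ?addr0.

Lemma conjC_complex (R : rcfType) (x : R) : (x%:C)^*%R = x%:C :> R[i].
Proof. by apply: conj_Creal; rewrite -complexr0 complex_real. Qed.

Lemma conjC_complexi (R : rcfType) : ('i : R[i])^*%R = - 'i.
Proof. by apply/eqP; rewrite eq_complex /= oppr0 !eqxx. Qed.

Lemma unimodular_eigen_i_trace0 (R : rcfType) (A B C D : R) (x y : R[i]) :
  A * D - B * C = 1 -> (x != 0) || (y != 0) ->
  x * A%:C + y * B%:C = 'i * x -> x * C%:C + y * D%:C = 'i * y -> A + D = 0.
Proof.
move=> det1 xy_neq0 eq_x eq_y.
set det := (A%:C - 'i) * (D%:C - 'i) - B%:C * C%:C.
have det_trace : det = - 'i * (A + D)%:C.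
  have i2 : 'i * 'i = -1 :> R[i] by rewrite -expr2 sqr_i.
  transitivity ((A * D - B * C)%:C - 'i * (A + D)%:C + 'i * 'i); last first.
    by rewrite det1 i2; ring.
  by rewrite /det rmorphB rmorphD !rmorphM; ring.
have x_det : x * det = 0.
  transitivity ((D%:C - 'i) * (x * A%:C + y * B%:C - 'i * x)
                - B%:C * (x * C%:C + y * D%:C - 'i * y)); first by rewrite /det; ring.
  by rewrite eq_x eq_y !subrr !mulr0 subrr.
have y_det : y * det = 0.
  transitivity ((A%:C - 'i) * (x * C%:C + y * D%:C - 'i * y)
                - C%:C * (x * A%:C + y * B%:C - 'i * x)); first by rewrite /det; ring.
  by rewrite eq_x eq_y !subrr !mulr0 subrr.
have /eqP : det = 0.
  by case/orP: xy_neq0 => [/mulfI|/mulfI] det0; apply: det0; rewrite mulr0.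
have i_neq0 : 'i != 0 :> R[i] by rewrite complexiE neq0Ci.
rewrite det_trace mulf_eq0 oppr_eq0 (negbTE i_neq0) /= => /eqP.
by move=> /(congr1 (@complex.Re R)).
Qed.

Section Lmatrix.
Variables (R : realType) (n : nat) (a b : int -> R).
Local Notation q := n.+2.

(* For q = 2 the corner terms fall on the off-diagonal entries, producing the
   special form of [Lmat] in that case. *)
Definition Lcoef (i j : nat) : R[i] :=
  (i == j)%:R * (b j.+1)%:C
  + ((0 < j)%N && (i == j.-1))%:R * (a j)%:C
  + (i == j.+1)%:R * (a j.+1)%:C
  + ((j == q.-1) && (i == 0%N))%:R * ('i * (a q)%:C)
  + ((j == 0%N) && (i == q.-1))%:R * (- ('i * (a q)%:C)).

Lemma Lmat_entry (i j : 'I_q) : Lmat q a b i j = Lcoef i j.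
Proof.
rewrite mxE /Lcoef; case: i j => [i Hi] [j Hj] /=.
rewrite -[Ordinal Hi == Ordinal Hj]/(i == j).
have [<-|nij] := eqVneq i j; first by decide_conds.
have [n0|n_neq0] := eqVneq n 0%N.
  (* [reflexivity] identifies the literals [a 1], [a 2] of [Lmat] with [a (Posz 1)], [a (Posz 2)]. *)
  subst n; have [[-> ->]|[-> ->]] : (i = 0 /\ j = 1 \/ i = 1 /\ j = 0)%N by lia.
    by decide_conds; reflexivity.
  by decide_conds; reflexivity.
have [->|not_super] := eqVneq j i.+1; first by decide_conds.
have [->|not_sub] := eqVneq i j.+1; first by decide_conds.
have [/andP[/eqP -> /eqP ->]|not_top] := boolP ((i == 0%N) && (j == q.-1)).
  by decide_conds.
have [/andP[/eqP -> /eqP ->]|not_bottom] := boolP ((i == q.-1) && (j == 0%N)).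
  by decide_conds.
by decide_conds.
Qed.

Lemma Lcoef_conj i j : (Lcoef j i)^*%R = Lcoef i j.
Proof.
have shift k l : ((0 < k)%N && (l == k.-1))%:R * (a k)%:C = (k == l.+1)%:R * (a l.+1)%:C :> R[i].
  case: k => [|k] /=; first by rewrite !mul0r.
  by rewrite eqSS eq_sym; case: eqP => [->|_] //; rewrite !mul0r.
have diag : (j == i)%:R * (b i.+1)%:C = (i == j)%:R * (b j.+1)%:C :> R[i].
  by rewrite eq_sym; case: eqP => [->|_] //; rewrite !mul0r.
rewrite /Lcoef !shift (andbC (j == _)) (andbC (j == 0%N)).
rewrite !rmorphD !rmorphM rmorphN rmorphM /= !conjC_nat !conjC_complex conjC_complexi diag.
ring.
Qed.

Lemma Lmat_hermitian : Lmat q a b \is hermsymmx.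
Proof.
apply/is_hermitianmxP; rewrite expr0 scale1r; apply/matrixP => i j.
by rewrite Lmat_entry 2!mxE Lmat_entry Lcoef_conj.
Qed.

End Lmatrix.

Section EigenvectorFloquet.
Variables (R : realType) (n : nat) (a b : int -> R).
Local Notation q := n.+2.
Variable v : 'rV[R[i]]_q.

Local Notation coord k := (v 0 (inord k)).

(* The left eigenvector equation for [Lmat] is the Jacobi recurrence for
   psi_k = v (k - 1) (1 <= k <= q), extended by the Floquet condition psi_(k+q) = i psi_k. *)
Definition floquet_seq (k : nat) : R[i] :=
  if k == 0%N then - ('i * coord q.-1) else if (k <= q)%N then coord k.-1 else 'i * coord 0.

Lemma sum_coord_indicator (c : bool) (m : nat) (z : R[i]) :
  \sum_(i < q) v 0 i * ((c && (i == m :> nat))%:R * z) = (c && (m < q)%N)%:R * (coord m * z).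
Proof.
case: c => /=; last by rewrite big1 ?mulr0n ?mul0r // => i _; rewrite ?mulr0n ?mul0r mulr0.
have [m_lt|m_ge] := ltnP m q.
  rewrite (bigD1 (Ordinal m_lt)) //= eqxx big1 ?addr0 /=.
    by rewrite !mul1r; congr (v 0 _ * _); apply/val_inj; rewrite /= inordK.
  by move=> i /negbTE i_neq; rewrite -val_eqE /= in i_neq; rewrite i_neq mul0r mulr0.
rewrite big1 ?mul0r // => i _; have /negbTE -> : (i != m :> nat).
  by apply/eqP => i_eq; move: (ltn_ord i); rewrite i_eq ltnNge m_ge.
by rewrite mul0r mulr0.
Qed.

Lemma sum_coord_delta (m : nat) (z : R[i]) :
  \sum_(i < q) v 0 i * ((i == m :> nat)%:R * z) = (m < q)%N%:R * (coord m * z).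
Proof. exact: (sum_coord_indicator true). Qed.

Lemma Lmat_mul_coord (j : nat) : (j < q)%N -> (v *m Lmat q a b) 0 (inord j) =
  coord j * (b j.+1)%:C
  + (0 < j)%N%:R * (coord j.-1 * (a j)%:C)
  + (j.+1 < q)%N%:R * (coord j.+1 * (a j.+1)%:C)
  + (j == q.-1)%:R * (coord 0 * ('i * (a q)%:C))
  + (j == 0%N)%:R * (coord q.-1 * (- ('i * (a q)%:C))).
Proof.
move=> j_lt; rewrite mxE.
under eq_bigr => i _ do rewrite Lmat_entry inordK // /Lcoef !mulrDr.
rewrite !big_split /= !sum_coord_delta !sum_coord_indicator.
have jp_lt : (j.-1 < q)%N by lia.
by rewrite j_lt jp_lt ltnSn /= !andbT mul1r.
Qed.

Lemma floquet_seq_rec (mu : R[i]) : a 0%N = a q -> v *m Lmat q a b = mu *: v ->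
  forall j, (j < q)%N ->
  (a j)%:C * floquet_seq j + (b j.+1)%:C * floquet_seq j.+1
  + (a j.+1)%:C * floquet_seq j.+2 = mu * floquet_seq j.+1.
Proof.
move=> a_wrap v_eigen j j_lt.
have := congr1 (fun M : 'M[R[i]]_(1, q) => M 0 (inord j)) v_eigen.
rewrite Lmat_mul_coord // mxE /floquet_seq.
have [->|j_neq0] := eqVneq j 0%N; first by decide_conds => <-; rewrite a_wrap; ring.
have [->|j_neq] := eqVneq j n.+1; first by decide_conds => <-; ring.
by decide_conds => <-; ring.
Qed.

End EigenvectorFloquet.

Section FloquetDiscriminant.
Variables (R : realType) (n : nat) (a b : int -> R).
Local Notation q := n.+2.
Hypothesis a_gt0 : forall k : int, 0 < a k.
Hypothesis a_wrap : a 0%N = a q.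
Variables (v : 'rV[R[i]]_q) (mu : R).
Hypothesis v_eigen : v *m Lmat q a b = mu%:C *: v.

Lemma jacobi_combination_rec (x y : R[i]) (k : nat) :
  let c k := x * (theta_ a b mu k)%:C + y * (phi_ a b mu k)%:C in
  (a k)%:C * c k + (b k.+1)%:C * c k.+1 + (a k.+1)%:C * c k.+2 = mu%:C * c k.+1.
Proof.
move=> c; have theta_rec := jacobi_seq_rec b a_gt0 mu 1 0 k.
have phi_rec := jacobi_seq_rec b a_gt0 mu 0 1 k.
rewrite /c /theta_ /phi_ -!/(jacobi_seq _ _ _ _ _ _).
transitivity (x * (a k * jacobi_seq a b mu 1 0 k + b k.+1 * jacobi_seq a b mu 1 0 k.+1
                   + a k.+1 * jacobi_seq a b mu 1 0 k.+2)%:C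
            + y * (a k * jacobi_seq a b mu 0 1 k + b k.+1 * jacobi_seq a b mu 0 1 k.+1
                   + a k.+1 * jacobi_seq a b mu 0 1 k.+2)%:C).
  by rewrite !rmorphD !rmorphM; ring.
by rewrite theta_rec phi_rec !rmorphM; ring.
Qed.

Lemma floquet_seq_combination k : (k <= q)%N ->
  let c k := floquet_seq v 0 * (theta_ a b mu k)%:C + floquet_seq v 1 * (phi_ a b mu k)%:C in
  floquet_seq v k = c k /\ floquet_seq v k.+1 = c k.+1.
Proof.
move=> + c; elim: k => [_|k IH k_lt].
  by rewrite /c /theta_ /phi_ /=; split; ring.
have [IH0 IH1] := IH (ltnW k_lt); split=> //.
have aC_neq0 : (a k.+1)%:C != 0 :> R[i] by rewrite eq_complex /= negb_and gt_eqF.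
apply: (mulfI aC_neq0).
have solve_last (x y z w : R[i]) : x + y + z = w -> z = w - x - y by move=> <-; ring.
rewrite (solve_last _ _ _ _ (floquet_seq_rec a_wrap v_eigen k_lt)).
by rewrite (solve_last _ _ _ _ (jacobi_combination_rec _ _ k)) IH0 IH1.
Qed.

Lemma eigenvalue_discr_root : v != 0 -> discr q a b mu = 0.
Proof.
move=> v_neq0.
have [psi_q psi_qS] := floquet_seq_combination (leqnn q).
set x := floquet_seq v 0 in psi_q psi_qS; set y := floquet_seq v 1 in psi_q psi_qS.
have wronskian : theta_ a b mu q * phi_ a b mu q.+1 - phi_ a b mu q * theta_ a b mu q.+1 = 1.
  apply: (mulfI (a_neq0 a_gt0 0)); rewrite mulr1 {1}a_wrap.
  exact: jacobi_wronskian.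
rewrite /discr addrC; apply: (unimodular_eigen_i_trace0 wronskian (x := x) (y := y)).
- apply: contraT; rewrite negb_or !negbK => /andP[/eqP x0 /eqP y0].
  suff v0 : v = 0 by rewrite v0 eqxx in v_neq0.
  apply/rowP => j; rewrite mxE.
  have [_ psi_jS] := floquet_seq_combination (ltnW (ltn_ord j)).
  move: psi_jS; rewrite -/x -/y x0 y0 !mul0r addr0 /floquet_seq.
  by have j_lt := ltn_ord j; decide_conds; rewrite inord_val.
- by rewrite -psi_q /x /floquet_seq; decide_conds; rewrite mulrN mulrA -expr2 sqr_i mulN1r opprK.
- by rewrite -psi_qS /y /floquet_seq; decide_conds.
Qed.

End FloquetDiscriminant.

Theorem mainTheorem11 (R : realType) (q : nat) (a b : int -> R) :
  (2 <= q)%N ->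
  (forall n : int, 0 < a n) ->
  (forall n : int, a (n + (Posz q)) = a n) ->
  (forall n : int, b (n + (Posz q)) = b n) ->
  normalised q a b ->
  forall j : nat, (1 <= j)%N ->
    (q%:R)^-1 * \tr (mxpow (Lmat q a b) (2 * j)) < ((halfwidth q a b) ^+ (2 * j))%:C%C.
Proof.
move=> q_ge2 a_gt0 a_per _ H_norm j j_gt0.
case: q q_ge2 a_per H_norm => [|[|n]] // _ a_per H_norm.
have a_wrap : a 0%N = a n.+2 by rewrite -(a_per 0) add0r.
have c_eq : halfwidth n.+2 a b = lamqm n.+2 a b by rewrite /halfwidth H_norm; field.
apply: (hermitian_trace_mxpow_lt (Lmat_hermitian n a b)) => // mu [v v_neq0 v_eigen].
have D_mu := eigenvalue_discr_root a_gt0 a_wrap v_eigen v_neq0.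
have /andP[lam0_lt lt_lamq] := discr_root_interior a_gt0 (isT : (0 < n.+2)%N) D_mu.
by rewrite c_eq ltr_norml lt_lamq -H_norm lam0_lt.
Qed.
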